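(* Let $0\to(M,\alpha_M)\to(K,\alpha_K)\xrightarrow{\pi}(L,\alpha_L)\to0$ and $0\to(N,\alpha_N)\to(H,\alpha_H)\xrightarrow{\tau}(K,\alpha_K)\to0$ be central extensions of Hom-Leibniz $n$-algebras. (a) If $\pi\circ\tau:(H,\alpha_H)\to(L,\alpha_L)$ is a universal $\alpha$-central extension, then $\tau$ is a universal central extension. (b) If $\tau$ is a universal central extension, then $\pi\circ\tau$ is an $\alpha$-central extension which is universal over central extensions: for every central extension $\omega:(P,\alpha_P)\to(L,\alpha_L)$ there is a unique homomorphism $\Phi:(H,\alpha_H)\to(P,\alpha_P)$ with $\omega\circ\Phi=\pi\circ\tau$.
   Context: Fix a field $\mathbb K$ and $n\ge2$. A (multiplicative) Hom-Leibniz $n$-algebra is a $\mathbb K$-vector space $L$ with an $n$-linear bracket and a linear map $\alpha_L$ preserving the bracket, satisfying $[[x_1,\dots,x_n],\alpha_L(y_1),\dots,\alpha_L(y_{n-1})]=\sum_{i=1}^n[\alpha_L(x_1),\dots,[x_i,y_1,\dots,y_{n-1}],\dots,\alpha_L(x_n)]$. Homomorphisms preserve brackets and commute with twisting maps. Center $Z(K)$: elements $x$ with every bracket having $x$ in some position equal to $0$. An extension of $L$ is a surjective homomorphism $\pi:K\to L$ with kernel $M$; central if $M\subseteq Z(K)$; $\alpha$-central if every bracket with $n-1$ entries in $\alpha_K(M)$ and the remaining entry (any position) in $K$ vanishes. A central extension $\pi:K\to L$ is universal central (resp. universal $\alpha$-central) if for every central (resp. $\alpha$-central) extension $\pi':K'\to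 L$ there is a unique homomorphism $h:K\to K'$ with $\pi'\circ h=\pi$. *)

From HB Require Import structures.
From mathcomp Require Import all_boot all_order all_algebra.
Set Implicit Arguments. Unset Strict Implicit. Unset Printing Implicit Defensive.
Import GRing.Theory.
Local Open Scope ring_scope.

Definition upd (V : Type) (n : nat) (f : 'I_n -> V) (i : 'I_n) (x : V) : 'I_n -> V :=
  fun j => if j == i then x else f j.

Record HomLeibniz (F : fieldType) (n : nat) := {
  carrier :> lmodType F;
  bracket : ('I_n -> carrier) -> carrier;
  twist : carrier -> carrier;
  twist_linear : linear twist;
  bracket_multilinear : forall (f : 'I_n -> carrier) (i : 'I_n) (a : F) (x y : carrier),
      bracket (upd f i (a *: x + y)) = a *: bracket (upd f i x) + bracket (upd f i y);
  twist_mult : forall f : 'I_n -> carrier, twist (bracket f) = bracket (fun j => twist (f j));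
  (* Hom-Leibniz identity: the entry of y at position 0 is ignored; the
     y_1..y_{n-1} of the paper are the entries of y at positions 1..n-1. *)
  hom_leibniz : forall (i0 : 'I_n), nat_of_ord i0 = 0%N ->
      forall (x y : 'I_n -> carrier),
      bracket (upd (fun j => twist (y j)) i0 (bracket x)) =
      \sum_(i < n) bracket (upd (fun j => twist (x j)) i (bracket (upd y i0 (x i))))
}.

Arguments bracket {F n} h _.
Arguments twist {F n} h _.

Section Defs.
Variables (F : fieldType) (n : nat).

Definition is_hom (A B : HomLeibniz F n) (f : A -> B) : Prop :=
  linear f /\
  (forall x : 'I_n -> A, f (bracket A x) = bracket B (fun j => f (x j))) /\
  (forall x : A, f (twist A x) = twist B (f x)).

Definition is_extension (A B : HomLeibniz F n) (f : A -> B) : Prop :=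
  is_hom f /\ (forall b : B, exists a : A, f a = b).

Definition in_center (A : HomLeibniz F n) (x : A) : Prop :=
  forall (y : 'I_n -> A) (i : 'I_n), bracket A (upd y i x) = 0.

Definition central_extension (A B : HomLeibniz F n) (f : A -> B) : Prop :=
  is_extension f /\ (forall m : A, f m = 0 -> in_center m).

Definition alpha_central_extension (A B : HomLeibniz F n) (f : A -> B) : Prop :=
  is_extension f /\
  (forall (y : 'I_n -> A) (i : 'I_n),
     (forall j : 'I_n, j != i -> exists m : A, f m = 0 /\ y j = twist A m) ->
     bracket A y = 0).

Definition unique_lift (A B C : HomLeibniz F n) (f : A -> B) (g : C -> B) : Prop :=
  exists h : C -> A, is_hom h /\ (forall x, f (h x) = g x) /\
    (forall h' : C -> A, is_hom h' -> (forall x, f (h' x) = g x) -> forall x, h' x = h x).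

Definition universal_central_extension (A B : HomLeibniz F n) (f : A -> B) : Prop :=
  central_extension f /\
  forall (P : HomLeibniz F n) (w : P -> B), central_extension w -> unique_lift w f.

Definition universal_alpha_central_extension (A B : HomLeibniz F n) (f : A -> B) : Prop :=
  central_extension f /\
  forall (P : HomLeibniz F n) (w : P -> B), alpha_central_extension w -> unique_lift w f.

End Defs.

(* Universality forces [H] to be perfect: extend [H] by any module [V] with zero
   bracket; the lifts [x |-> (x, 0)] and [x |-> (x, phi x)] of a map [phi] killing
   brackets must coincide, and [phi] may be the projection of [H] modulo its span of
   brackets.  Given a central extension [w : P -> B] and [g : H -> B], the pullback
   [H x_B P] is an extension of the same kind as the one being lifted (central for
   [tau], alpha-central for [pi \o tau]); a universal lift into it has identity as
   first component, and its second component lifts [g] through [w], uniquely because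
   [H] is perfect.  Finally [pi \o tau] is alpha-central since, by the Hom-Leibniz
   identity, a bracket with one bracket entry and all others twisted preimages of
   central elements vanishes. *)

From HB Require Import structures.
From mathcomp Require Import all_boot all_order all_algebra.
From Stdlib Require Import ClassicalDescription ClassicalEpsilon FunctionalExtensionality.
Set Implicit Arguments. Unset Strict Implicit. Unset Printing Implicit Defensive.
Import GRing.Theory.
Local Open Scope ring_scope.

Definition asbool (P : Prop) : bool :=
  if excluded_middle_informative P then true else false.

Lemma asboolP (P : Prop) : reflect P (asbool P).
Proof. by rewrite /asbool; case: excluded_middle_informative => h; constructor. Qed.

Section LinearFacts.
Variables (F : fieldType) (U V : lmodType F) (f : U -> V) (hf : linear f).
HB.instance Definition _ := GRing.isLinear.Build F U V *:%R f hf.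

Lemma lin0 : f 0 = 0. Proof. exact: raddf0. Qed.
Lemma linB x y : f (x - y) = f x - f y. Proof. exact: raddfB. Qed.
Lemma lin_sum (I : Type) (s : seq I) (g : I -> U) :
  f (\sum_(t <- s) g t) = \sum_(t <- s) f (g t).
Proof. exact: raddf_sum. Qed.
End LinearFacts.

Section LmodQuotient.
Local Open Scope quotient_scope.
Variables (F : fieldType) (V : lmodType F).

Definition subspace (S : V -> Prop) : Prop :=
  [/\ S 0, forall x y, S x -> S y -> S (x + y) & forall a x, S x -> S (a *: x)].

Variables (S : V -> Prop) (hS : subspace S).

Definition subspace_pred : {pred V} := fun x => asbool (S x).

Lemma subspace_pred_zmod_closed : zmod_closed subspace_pred.
Proof.
case: hS => S0 SD SZ; split; first exact/asboolP.
move=> x y /asboolP Sx /asboolP Sy; apply/asboolP.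
by rewrite -scaleN1r; apply: SD _ _ Sx (SZ _ _ Sy).
Qed.
HB.instance Definition _ :=
  GRing.isZmodClosed.Build V subspace_pred subspace_pred_zmod_closed.

Definition lquot := Quotient.quot subspace_pred.
Definition qproj : V -> lquot := \pi.

Lemma qprojD x y : qproj (x + y) = qproj x + qproj y.
Proof. by rewrite /qproj !piE. Qed.

Lemma qprojB x y : qproj (x - y) = qproj x - qproj y.
Proof. by rewrite /qproj !piE. Qed.

Lemma qproj_eq0 x : qproj x = 0 <-> S x.
Proof.
have := Quotient.idealrBE subspace_pred x 0.
rewrite subr0 -/(qproj x) -/(qproj 0) /qproj pi_zeror => e; split.
  by move=> h; have /asboolP : x \in subspace_pred by rewrite e h.
by move=> h; apply/eqP; rewrite -e; apply/asboolP.
Qed.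

Lemma qproj_surj (q : lquot) : exists x, qproj x = q.
Proof. by exists (repr q); rewrite /qproj reprK. Qed.

Lemma S_repr_qprojB x : S (repr (qproj x) - x).
Proof. by apply/qproj_eq0; rewrite qprojB {1}/qproj reprK subrr. Qed.

Definition qscale (a : F) (q : lquot) : lquot := qproj (a *: repr q).

Lemma qscale_proj a x : qscale a (qproj x) = qproj (a *: x).
Proof.
apply/eqP; rewrite -subr_eq0 -qprojB -scalerBr; apply/eqP/qproj_eq0.
by case: hS => _ _ SZ; apply/SZ/S_repr_qprojB.
Qed.

Lemma qscaleA a b q : qscale a (qscale b q) = qscale (a * b) q.
Proof. by have [x <-] := qproj_surj q; rewrite !qscale_proj scalerA. Qed.

Lemma qscale1 : left_id 1 qscale.
Proof. by move=> q; have [x <-] := qproj_surj q; rewrite qscale_proj scale1r. Qed.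

Lemma qscaleDr : right_distributive qscale +%R.
Proof.
move=> a p q; have [x <-] := qproj_surj p; have [y <-] := qproj_surj q.
by rewrite -qprojD !qscale_proj scalerDr qprojD.
Qed.

Lemma qscaleDl q : {morph qscale^~ q : a b / a + b}.
Proof.
by move=> a b; have [x <-] := qproj_surj q; rewrite !qscale_proj scalerDl qprojD.
Qed.

HB.instance Definition _ := GRing.Zmodule.on lquot.
HB.instance Definition _ :=
  GRing.Zmodule_isLmodule.Build F lquot qscaleA qscale1 qscaleDr qscaleDl.

Lemma qproj_linear : linear qproj.
Proof. by move=> a x y; rewrite qprojD -qscale_proj. Qed.

Variables (al : V -> V) (hal : linear al) (Sal : forall x, S x -> S (al x)).

Definition qendo (q : lquot) : lquot := qproj (al (repr q)).

Lemma qendo_proj x : qendo (qproj x) = qproj (al x).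
Proof.
apply/eqP; rewrite -subr_eq0 -qprojB -(linB hal); apply/eqP/qproj_eq0.
exact/Sal/S_repr_qprojB.
Qed.

Lemma qendo_linear : linear qendo.
Proof.
move=> a p q; have [x <-] := qproj_surj p; have [y <-] := qproj_surj q.
by rewrite -qproj_linear !qendo_proj hal qproj_linear.
Qed.
End LmodQuotient.

Arguments qendo {F V S} hS al q.
Arguments qendo_linear {F V S} hS {al} hal Sal.

Section UpdFacts.
Variables (n : nat) (T : Type) (f : 'I_n -> T).

Lemma upd_same i x : upd f i x i = x.
Proof. by rewrite /upd eqxx. Qed.

Lemma upd_other i j x : j != i -> upd f i x j = f j.
Proof. by rewrite /upd => /negbTE ->. Qed.

Lemma upd_id i : upd f i (f i) = f.
Proof. by apply: functional_extensionality => j; rewrite /upd; case: eqP => // ->. Qed.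

Lemma upd_upd i x y : upd (upd f i x) i y = upd f i y.
Proof. by apply: functional_extensionality => j; rewrite /upd; case: eqP. Qed.

Lemma map_upd (U : Type) (h : T -> U) i x :
  (fun j => h (upd f i x j)) = upd (fun j => h (f j)) i (h x).
Proof. by apply: functional_extensionality => j; rewrite /upd; case: (j == i). Qed.
End UpdFacts.

Lemma exists_other_ord n (i : 'I_n) : (2 <= n)%N -> exists j : 'I_n, j != i.
Proof.
case: n i => [|[|n]] i // _.
by case: (eqVneq i ord0) => [->|ne]; [exists ord_max | exists ord0; rewrite eq_sym].
Qed.

Section BracketFacts.
Variables (F : fieldType) (n : nat) (A : HomLeibniz F n).

Lemma bracketD f i x y :
  bracket A (upd f i (x + y)) = bracket A (upd f i x) + bracket A (upd f i y).
Proof. by have := bracket_multilinear f i 1 x y; rewrite !scale1r. Qed.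

Lemma bracket0 f i : bracket A (upd f i 0) = 0.
Proof.
have := bracketD f i 0 0; rewrite addr0 => /eqP.
by rewrite -subr_eq subrr eq_sym => /eqP.
Qed.

Lemma bracketZ f i a x : bracket A (upd f i (a *: x)) = a *: bracket A (upd f i x).
Proof. by have := bracket_multilinear f i a x 0; rewrite !addr0 bracket0 addr0. Qed.

Lemma bracket_sum f i (I : Type) (s : seq I) (g : I -> A) :
  bracket A (upd f i (\sum_(t <- s) g t)) = \sum_(t <- s) bracket A (upd f i (g t)).
Proof.
elim: s => [|a s IH]; first by rewrite !big_nil bracket0.
by rewrite !big_cons bracketD IH.
Qed.

Lemma bracket_eq_mod_center (f g : 'I_n -> A) :
  (forall j, in_center (f j - g j)) -> bracket A f = bracket A g.
Proof.
move=> fg_center.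
pose mix k (j : 'I_n) := if (j < k)%N then g j else f j.
suff mixE k : (k <= n)%N -> bracket A (mix k) = bracket A f.
  rewrite -(mixE n (leqnn n)); congr (bracket A _).
  by apply: functional_extensionality => j; rewrite /mix ltn_ord.
elim: k => [|k IH] lt_k.
  by congr (bracket A _); apply: functional_extensionality => j; rewrite /mix ltn0.
pose i := Ordinal lt_k.
have mixS : mix k.+1 = upd (mix k) i (g i).
  apply: functional_extensionality => j; rewrite /mix /upd -val_eqE /= ltnS leq_eqVlt.
  by case: eqP => [e|] //=; congr g; apply: val_inj.
have mix_fi : mix k = upd (mix k) i (f i) by rewrite -{1}(upd_id (mix k) i) /mix /= ltnn.
rewrite mixS -(IH (ltnW lt_k)) {2}mix_fi -[f i](subrK (g i)) bracketD.
by rewrite (fg_center i) add0r.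
Qed.

Definition bracket_span (x : A) : Prop :=
  exists s : seq ('I_n -> A), x = \sum_(t <- s) bracket A t.

Definition perfect : Prop := forall x : A, bracket_span x.

Lemma bracket_span_bracket f : bracket_span (bracket A f).
Proof. by exists [:: f]; rewrite big_seq1. Qed.

Lemma bracket_span_subspace : (0 < n)%N -> subspace bracket_span.
Proof.
move=> n_gt0; split=> [|x y [s ->] [t ->]|a x [s ->]].
- by exists [::]; rewrite big_nil.
- by exists (s ++ t); rewrite big_cat.
pose i0 := Ordinal n_gt0.
exists (map (fun t => upd t i0 (a *: t i0)) s); rewrite big_map scaler_sumr.
by apply: eq_bigr => t _; rewrite bracketZ upd_id.
Qed.

Lemma bracket_span_twist x : bracket_span x -> bracket_span (twist A x).
Proof.
move=> [s ->]; exists (map (fun t j => twist A (t j)) s).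
by rewrite big_map (lin_sum (@twist_linear _ _ A)); apply: eq_bigr => t _; apply: twist_mult.
Qed.
End BracketFacts.

Lemma prod_ext (U W : Type) (p q : U * W) : p.1 = q.1 -> p.2 = q.2 -> p = q.
Proof. by case: p q => [a b] [c d] /= -> ->. Qed.

Section Homomorphisms.
Variables (F : fieldType) (n : nat).
Implicit Types A B C : HomLeibniz F n.

Lemma hom_linear A B (f : A -> B) : is_hom f -> linear f.
Proof. by case. Qed.

Lemma hom_bracket A B (f : A -> B) :
  is_hom f -> forall x, f (bracket A x) = bracket B (fun j => f (x j)).
Proof. by case=> _ []. Qed.

Lemma hom_twist A B (f : A -> B) : is_hom f -> forall x, f (twist A x) = twist B (f x).
Proof. by case=> _ []. Qed.

Lemma hom_id A : is_hom (fun x : A => x).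
Proof. by []. Qed.

Lemma hom_comp A B C (f : A -> B) (g : B -> C) :
  is_hom f -> is_hom g -> is_hom (fun x => g (f x)).
Proof.
move=> hf hg; split; [|split].
- by move=> a u v; rewrite (hom_linear hf) (hom_linear hg).
- by move=> x; rewrite (hom_bracket hf) (hom_bracket hg).
- by move=> x; rewrite (hom_twist hf) (hom_twist hg).
Qed.

Lemma extension_comp A B C (f : A -> B) (g : B -> C) :
  is_extension f -> is_extension g -> is_extension (fun x => g (f x)).
Proof.
move=> [hf f_surj] [hg g_surj]; split; first exact: hom_comp.
by move=> c; have [b <-] := g_surj c; have [a <-] := f_surj b; exists a.
Qed.

Lemma extension_section A B (f : A -> B) :
  is_extension f -> exists s : B -> A, cancel s f.
Proof. by case=> _; apply: ClassicalEpsilon.choice. Qed.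

Lemma unique_lift_id A B (f : A -> B) (h : A -> A) :
  unique_lift f f -> is_hom h -> (forall x, f (h x) = f x) -> forall x, h x = x.
Proof.
move=> [h0 [_ [_ h0_uniq]]] hh fh x.
by rewrite (h0_uniq h hh fh) -(h0_uniq _ (hom_id A) (fun _ => erefl)).
Qed.

Section CentralExtension.
Variables (P B : HomLeibniz F n) (w : P -> B) (hw : central_extension w).

Lemma central_extension_center u v : w u = w v -> in_center (u - v).
Proof. by move=> e; apply: hw.2; rewrite (linB (hom_linear hw.1.1)) e subrr. Qed.

Lemma bracket_eq_mod_kernel (f g : 'I_n -> P) :
  (fun j => w (f j)) = (fun j => w (g j)) -> bracket P f = bracket P g.
Proof.
move=> e; apply: bracket_eq_mod_center => j.
exact/central_extension_center/(equal_f e j).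
Qed.

Lemma central_alpha_central : (2 <= n)%N -> alpha_central_extension w.
Proof.
move=> n_ge2; split=> [|y i y_twist]; first exact: hw.1.
have [j ne_ji] := exists_other_ord i n_ge2.
have [m [wm0 yj]] := y_twist j ne_ji.
rewrite -(upd_id y j) yj; apply: hw.2.
by rewrite (hom_twist hw.1.1) wm0 (lin0 (@twist_linear _ _ B)).
Qed.
End CentralExtension.
End Homomorphisms.

Section Cocycle.
Variables (F : fieldType) (n : nat).

(* The conditions making [A * V], with bracket [x |-> (bracket x.1, Phi x.1)] and
   twist [twist_A * beta], a Hom-Leibniz n-algebra: [V] is an abelian ideal on
   which [A] acts trivially. *)
Definition cocycle (A : HomLeibniz F n) (V : lmodType F) (beta : V -> V)
    (Phi : ('I_n -> A) -> V) : Prop :=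
  [/\ forall f i a x y, Phi (upd f i (a *: x + y)) = a *: Phi (upd f i x) + Phi (upd f i y),
      forall f, beta (Phi f) = Phi (fun j => twist A (f j)) &
      forall i0 : 'I_n, nat_of_ord i0 = 0%N -> forall x y : 'I_n -> A,
        Phi (upd (fun j => twist A (y j)) i0 (bracket A x)) =
        \sum_(i < n) Phi (upd (fun j => twist A (x j)) i (bracket A (upd y i0 (x i))))].

Lemma cocycle0 (A : HomLeibniz F n) (V : lmodType F) (beta : V -> V) :
  linear beta -> cocycle beta (fun _ : 'I_n -> A => 0).
Proof.
move=> hbeta; split=> [*|_|*]; first by rewrite scaler0 addr0.
  exact: lin0 hbeta.
by rewrite big1.
Qed.

Section CocycleExtension.
Variables (A : HomLeibniz F n) (V : lmodType F) (beta : V -> V) (hbeta : linear beta)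
  (Phi : ('I_n -> A) -> V) (hPhi : cocycle beta Phi).

Definition cext_bracket (f : 'I_n -> A * V) : A * V :=
  (bracket A (fun j => (f j).1), Phi (fun j => (f j).1)).
Definition cext_twist (u : A * V) : A * V := (twist A u.1, beta u.2).

Lemma fst_upd (f : 'I_n -> A * V) i z :
  (fun j => (upd f i z j).1) = upd (fun j => (f j).1) i z.1.
Proof. exact: map_upd. Qed.

Lemma fst_sum (I : Type) (r : seq I) (G : I -> A * V) :
  (\sum_(t <- r) G t).1 = \sum_(t <- r) (G t).1.
Proof. by elim: r => [|a r IH]; rewrite ?big_nil // !big_cons /= -IH. Qed.

Lemma snd_sum (I : Type) (r : seq I) (G : I -> A * V) :
  (\sum_(t <- r) G t).2 = \sum_(t <- r) (G t).2.
Proof. by elim: r => [|a r IH]; rewrite ?big_nil // !big_cons /= -IH. Qed.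

Lemma cext_twist_linear : linear cext_twist.
Proof. by move=> a u v; apply: prod_ext; rewrite /= ?twist_linear ?hbeta. Qed.

Lemma cext_bracket_multilinear (f : 'I_n -> A * V) i a x y :
  cext_bracket (upd f i (a *: x + y)) =
  a *: cext_bracket (upd f i x) + cext_bracket (upd f i y).
Proof.
case: hPhi => Phi_ml _ _.
by apply: prod_ext; rewrite /cext_bracket /= !fst_upd /= ?bracket_multilinear ?Phi_ml.
Qed.

Lemma cext_twist_mult f : cext_twist (cext_bracket f) = cext_bracket (fun j => cext_twist (f j)).
Proof. by case: hPhi => _ Phi_tw _; apply: prod_ext; rewrite /= ?twist_mult ?Phi_tw. Qed.

Lemma cext_hom_leibniz (i0 : 'I_n) : nat_of_ord i0 = 0%N -> forall x y : 'I_n -> A * V,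
  cext_bracket (upd (fun j => cext_twist (y j)) i0 (cext_bracket x)) =
  \sum_(i < n) cext_bracket (upd (fun j => cext_twist (x j)) i
                                 (cext_bracket (upd y i0 (x i)))).
Proof.
case: hPhi => _ _ Phi_hl i0_0 x y.
apply: prod_ext; rewrite ?fst_sum ?snd_sum /cext_bracket /= fst_upd /=.
  by rewrite (hom_leibniz i0_0); apply: eq_bigr => i _; rewrite !fst_upd.
by rewrite (Phi_hl _ i0_0); apply: eq_bigr => i _; rewrite !fst_upd.
Qed.

Definition cocycle_ext : HomLeibniz F n :=
  {| carrier := (A * V)%type; bracket := cext_bracket; twist := cext_twist;
     twist_linear := cext_twist_linear; bracket_multilinear := cext_bracket_multilinear;
     twist_mult := cext_twist_mult; hom_leibniz := cext_hom_leibniz |}.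

Lemma hom_pair (C : HomLeibniz F n) (g : C -> A) (k : C -> V) :
  is_hom g -> linear k -> (forall x, k (bracket C x) = Phi (fun j => g (x j))) ->
  (forall x, k (twist C x) = beta (k x)) ->
  is_hom (fun x => (g x, k x) : cocycle_ext).
Proof.
move=> [gl [gb gt]] kl kb kt; split; [|split].
- by move=> a u v; apply: prod_ext; rewrite /= ?gl ?kl.
- by move=> x; apply: prod_ext; rewrite /= ?gb ?kb.
- by move=> x; apply: prod_ext; rewrite /= ?gt ?kt.
Qed.

Lemma hom_fst (C : HomLeibniz F n) (h : C -> cocycle_ext) :
  is_hom h -> is_hom (fun x => (h x).1).
Proof. by move=> [hl [hb ht]]; split; [|split] => [a u v|x|x]; rewrite ?hl ?hb ?ht. Qed.

Lemma hom_snd (C : HomLeibniz F n) (h : C -> cocycle_ext) : is_hom h ->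
  [/\ linear (fun x => (h x).2),
      forall x, (h (bracket C x)).2 = Phi (fun j => (h (x j)).1) &
      forall x, (h (twist C x)).2 = beta (h x).2].
Proof. by move=> [hl [hb ht]]; split => [a u v|x|x]; rewrite ?hl ?hb ?ht. Qed.

Lemma cext_fst_extension (B : HomLeibniz F n) (f : A -> B) :
  is_extension f -> is_extension (fun u : cocycle_ext => f u.1).
Proof.
move=> [[fl [fb ft]] f_surj]; split; first by split; [|split] => [a u v|x|x] /=;
  rewrite ?fl ?fb ?ft.
by move=> b; have [a <-] := f_surj b; exists (a, 0).
Qed.

Lemma cext_fst_central (B : HomLeibniz F n) (f : A -> B) :
  central_extension f -> (forall y i m, f m = 0 -> Phi (upd y i m) = 0) ->
  central_extension (fun u : cocycle_ext => f u.1).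
Proof.
move=> [fe f_center] Phi_ker; split; first exact: cext_fst_extension.
move=> m fm0 y i; apply: prod_ext; rewrite /= /cext_bracket fst_upd; first exact: f_center.
exact: Phi_ker.
Qed.

Lemma cext_fst_alpha_central (B : HomLeibniz F n) (f : A -> B) : (2 <= n)%N ->
  central_extension f ->
  (forall y i, (forall j, j != i -> exists m, f m = 0 /\ y j = twist A m) -> Phi y = 0) ->
  alpha_central_extension (fun u : cocycle_ext => f u.1).
Proof.
move=> n_ge2 hf Phi_alpha; split=> [|y i y_twist]; first exact: cext_fst_extension hf.1.
apply: prod_ext; rewrite /= /cext_bracket.
  apply: (central_alpha_central hf n_ge2).2 => j ne_ji.
  by have [m [fm0 ->]] := y_twist j ne_ji; exists m.1.
apply: Phi_alpha => j ne_ji; have [m [fm0 ->]] := y_twist j ne_ji.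
by exists m.1.
Qed.
End CocycleExtension.
End Cocycle.

Section Perfectness.
Variables (F : fieldType) (n : nat) (C B : HomLeibniz F n) (f : C -> B).

Definition trivial_ext (V : lmodType F) (beta : V -> V) (hbeta : linear beta) :=
  cocycle_ext hbeta (cocycle0 C hbeta).

Hypothesis f_univ : forall (V : lmodType F) (beta : V -> V) (hbeta : linear beta),
  unique_lift (fun u : trivial_ext hbeta => f u.1) f.

Lemma unique_lift_trivial_ext_eq0 (V : lmodType F) (beta : V -> V) (hbeta : linear beta)
    (phi : C -> V) :
  linear phi -> (forall x, phi (bracket C x) = 0) ->
  (forall x, phi (twist C x) = beta (phi x)) -> forall x, phi x = 0.
Proof.
move=> phi_lin phi_bracket phi_twist x.
have [h0 [_ [_ lift_uniq]]] := f_univ hbeta.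
have hom0 : is_hom (fun x => (x, 0) : trivial_ext hbeta).
  apply: hom_pair => //; first by move=> a u v; rewrite scaler0 addr0.
  by move=> y; rewrite (lin0 hbeta).
have hom_phi : is_hom (fun x => (x, phi x) : trivial_ext hbeta) by apply: hom_pair.
have e0 := lift_uniq _ hom0 (fun _ => erefl) x.
have e1 := lift_uniq _ hom_phi (fun _ => erefl) x.
exact: (congr1 snd (etrans e1 (esym e0))).
Qed.

Lemma perfect_of_unique_lift_trivial_ext : (0 < n)%N -> perfect C.
Proof.
move=> n_gt0 x; have hS := bracket_span_subspace C n_gt0.
have twist_span := @bracket_span_twist _ _ C.
apply/(qproj_eq0 hS).
apply: (unique_lift_trivial_ext_eq0 (qendo_linear hS (@twist_linear _ _ C) twist_span)
  (qproj_linear hS)).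
- by move=> y; apply/qproj_eq0; apply: bracket_span_bracket.
- by move=> y; rewrite (qendo_proj hS (@twist_linear _ _ C) twist_span).
Qed.
End Perfectness.

Lemma choice_neq (n : nat) (T : Type) (t0 : T) (i : 'I_n) (R : 'I_n -> T -> Prop) :
  (forall j, j != i -> exists t, R j t) -> exists m : 'I_n -> T, forall j, j != i -> R j (m j).
Proof.
move=> hR; apply: (ClassicalEpsilon.choice (fun j t => j != i -> R j t)) => j.
by case: (eqVneq j i) => [->|/hR [t Rt]]; [exists t0 | exists t].
Qed.

Section TwistedCenter.
Variables (F : fieldType) (n : nat) (n_ge2 : (2 <= n)%N) (P K : HomLeibniz F n)
  (w : P -> K) (hw : central_extension w).

(* Hom-Leibniz identity for [x := upd p i (z 0)] and [y := z]: every term but the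
   one with the bracket in position [i] has an entry in [w^-1 (Z K)]. *)
Lemma bracket_twist_center_bracket (p : 'I_n -> P) i (z : 'I_n -> P) :
  (forall j, j != i -> in_center (w (p j))) ->
  bracket P (upd (fun j => twist P (p j)) i (bracket P z)) = 0.
Proof.
move=> p_center; pose i0 := Ordinal (ltnW n_ge2).
have hw_br := hom_bracket hw.1.1.
have := @hom_leibniz _ _ P i0 erefl (upd p i (z i0)) z.
rewrite (bigD1 i) //= big1 ?addr0; last first.
  move=> k ne_ki; apply: hw.2.
  by rewrite hw_br upd_other // map_upd; apply: p_center.
rewrite upd_same upd_id map_upd upd_upd => <-; apply: hw.2.
have [j ne_ji] := exists_other_ord i n_ge2.
rewrite hw_br map_upd -(upd_id (upd _ i _) j) upd_other //.
exact: p_center.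
Qed.

Lemma bracket_twist_center_span (y p : 'I_n -> P) i :
  (forall j, j != i -> in_center (w (p j)) /\ w (y j) = w (twist P (p j))) ->
  (exists q, bracket_span q /\ w (y i) = w q) -> bracket P y = 0.
Proof.
move=> yp [_ [[s ->] wyi]].
rewrite (@bracket_eq_mod_kernel _ _ _ _ w hw y
  (upd (fun j => twist P (p j)) i (\sum_(t <- s) bracket P t))).
  rewrite bracket_sum big1 // => t _.
  by apply: bracket_twist_center_bracket => j /yp [].
apply: functional_extensionality => j; rewrite /upd; case: eqP => [->|/eqP /yp []] //.
Qed.
End TwistedCenter.

Lemma comp_alpha_central (F : fieldType) (n : nat) (L K H : HomLeibniz F n)
    (pi : K -> L) (tau : H -> K) : (2 <= n)%N ->
  central_extension pi -> central_extension tau -> perfect H ->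
  alpha_central_extension (fun x => pi (tau x)).
Proof.
move=> n_ge2 hpi htau perfH; split=> [|y i y_twist].
  exact: extension_comp htau.1 hpi.1.
have [m hm] := choice_neq 0 y_twist.
apply: (bracket_twist_center_span n_ge2 htau (p := m) (i := i)).
  by move=> j /hm [pim0 ->]; split=> //; apply: hpi.2.
by exists (y i).
Qed.

Section Pullback.
Variables (F : fieldType) (n : nat) (H B P : HomLeibniz F n)
  (g : H -> B) (hg : is_hom g) (w : P -> B) (hw : central_extension w)
  (s : B -> P) (hs : cancel s w).

(* Brackets in [P] only depend on their image in [B], hence [s] may be any set-theoretic
   section of [w]: this makes [H * P] the pullback of [w] along [g]. *)
Definition pullback_bracket (a : 'I_n -> H) : P := bracket P (fun j => s (g (a j))).

Lemma pullback_bracketE (a : 'I_n -> H) (f : 'I_n -> P) :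
  (forall j, w (f j) = g (a j)) -> pullback_bracket a = bracket P f.
Proof.
move=> wf; apply: (bracket_eq_mod_kernel hw).
by apply: functional_extensionality => j; rewrite hs wf.
Qed.

Lemma pullback_bracket_upd f i x :
  pullback_bracket (upd f i x) = bracket P (upd (fun j => s (g (f j))) i (s (g x))).
Proof. by rewrite /pullback_bracket (map_upd f (fun t => s (g t))). Qed.

Let hw_lin := hom_linear hw.1.1.
Let hw_br := hom_bracket hw.1.1.
Let hw_tw := hom_twist hw.1.1.

Lemma w_pullback_bracket a : w (pullback_bracket a) = g (bracket H a).
Proof.
rewrite hw_br (hom_bracket hg); congr (bracket B _).
by apply: functional_extensionality => j; rewrite hs.
Qed.

Lemma pullback_cocycle : cocycle (twist P) pullback_bracket.
Proof.
split=> [f i a x y | f | i0 i0_0 x y].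
- rewrite (@pullback_bracketE _ (upd (fun j => s (g (f j))) i (a *: s (g x) + s (g y)))).
    by rewrite bracket_multilinear !pullback_bracket_upd.
  by move=> j; rewrite /upd; case: (j == i); rewrite ?hw_lin ?hs ?(hom_linear hg).
- rewrite twist_mult; symmetry; apply: pullback_bracketE => j.
  by rewrite hw_tw hs (hom_twist hg).
rewrite (@pullback_bracketE _ (upd (fun j => twist P (s (g (y j)))) i0
                                   (pullback_bracket x))); last first.
  move=> j; rewrite /upd; case: (j == i0); first exact: w_pullback_bracket.
  by rewrite hw_tw hs (hom_twist hg).
rewrite (hom_leibniz i0_0); apply: eq_bigr => i _; symmetry; apply: pullback_bracketE => j.
rewrite /upd; case: (j == i); last by rewrite hw_tw hs (hom_twist hg).
by rewrite -pullback_bracket_upd w_pullback_bracket.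
Qed.

Definition pullback_ext := cocycle_ext (@twist_linear _ _ P) pullback_cocycle.

Lemma unique_lift_of_pullback_section (h : H -> pullback_ext) : perfect H ->
  is_hom h -> (forall x, (h x).1 = x) -> unique_lift w g.
Proof.
move=> perfH hh h_fst; have [h2_lin h2_br h2_tw] := hom_snd hh.
have h2_bracket x : (h (bracket H x)).2 = pullback_bracket x.
  by rewrite h2_br; congr pullback_bracket; apply: functional_extensionality => j.
have w_h2 x : w (h x).2 = g x.
  have [t ->] := perfH x.
  rewrite (lin_sum h2_lin) (lin_sum hw_lin) (lin_sum (hom_linear hg)).
  by apply: eq_bigr => u _; rewrite h2_bracket w_pullback_bracket.
exists (fun x => (h x).2); split; [split; [|split] | split] => //.
- by move=> x; rewrite h2_bracket; apply: pullback_bracketE => j; rewrite w_h2.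
move=> h' hh' wh' x; have [t ->] := perfH x.
rewrite (lin_sum (hom_linear hh')) (lin_sum h2_lin); apply: eq_bigr => u _.
by rewrite (hom_bracket hh') h2_bracket; symmetry; apply: pullback_bracketE.
Qed.

Lemma unique_lift_via_pullback (C : HomLeibniz F n) (f : H -> C) : perfect H ->
  unique_lift f f -> unique_lift (fun u : pullback_ext => f u.1) f -> unique_lift w g.
Proof.
move=> perfH f_univ [h [hh [fh _]]].
apply: (unique_lift_of_pullback_section perfH hh).
exact: unique_lift_id f_univ (hom_fst hh) fh.
Qed.

Lemma pullback_central (K : HomLeibniz F n) (f : H -> K) :
  central_extension f -> (forall m, f m = 0 -> g m = 0) ->
  central_extension (fun u : pullback_ext => f u.1).
Proof.
move=> hf gf0; apply: cext_fst_central => // y i m /gf0 gm0.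
rewrite /= pullback_bracket_upd; apply: hw.2.
by rewrite hs gm0.
Qed.

Lemma pullback_alpha_central (L : HomLeibniz F n) (f : H -> L) : (2 <= n)%N ->
  central_extension f -> (forall m, f m = 0 -> in_center (g m)) -> perfect H ->
  alpha_central_extension (fun u : pullback_ext => f u.1).
Proof.
move=> n_ge2 hf g_center perfH; apply: cext_fst_alpha_central => // y i y_twist.
have [m hm] := choice_neq 0 y_twist.
apply: (bracket_twist_center_span n_ge2 hw (p := fun j => s (g (m j))) (i := i)).
  move=> j /hm [fm0 ->]; rewrite hs; split; first exact: g_center.
  by rewrite hw_tw !hs (hom_twist hg).
have [t yt] := perfH (y i).
exists (\sum_(u <- t) pullback_bracket u); split.
  by exists (map (fun u k => s (g (u k))) t); rewrite big_map.
rewrite hs yt (lin_sum (hom_linear hg)) (lin_sum hw_lin).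
by apply: eq_bigr => u _; rewrite w_pullback_bracket.
Qed.
End Pullback.

Arguments unique_lift_via_pullback {F n H B P g} hg {w} hw {s} hs {C f}.

Unset Implicit Arguments.
Theorem proposition5p8 (F : fieldType) (n : nat) (hn : (2 <= n)%N)
  (L K H : HomLeibniz F n) (pi : K -> L) (tau : H -> K) :
  central_extension pi -> central_extension tau ->
  (universal_alpha_central_extension (fun x => pi (tau x)) ->
     universal_central_extension tau) /\
  (universal_central_extension tau ->
     alpha_central_extension (fun x => pi (tau x)) /\
     forall (P : HomLeibniz F n) (w : P -> L), central_extension w ->
       unique_lift w (fun x => pi (tau x))).
Proof.
move=> hpi htau; have n_gt0 : (0 < n)%N := ltnW hn.
split=> [[hpt univ] | [_ univ]].
- have perfH : perfect H.
    apply: (perfect_of_unique_lift_trivial_ext (f := fun x => pi (tau x))) n_gt0.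
    move=> V beta hbeta; apply: univ.
    by apply: (cext_fst_alpha_central hbeta (cocycle0 H hbeta) (f := fun x => pi (tau x))).
  split=> // P w hw; have [s hs] := extension_section hw.1.
  apply: (unique_lift_via_pullback htau.1.1 hw hs perfH).
    exact/univ/central_alpha_central.
  apply: univ; apply: (pullback_alpha_central htau.1.1 hw hs (f := fun x => pi (tau x))) => //.
  by move=> m /hpi.2.
- have perfH : perfect H.
    apply: (perfect_of_unique_lift_trivial_ext (f := tau)) n_gt0.
    by move=> V beta hbeta; apply/univ/(cext_fst_central hbeta (cocycle0 H hbeta)).
  split=> [|P w hw]; first exact: comp_alpha_central.
  have [s hs] := extension_section hw.1.
  have hpt := extension_comp htau.1 hpi.1.
  apply: (unique_lift_via_pullback hpt.1 hw hs perfH (univ _ _ htau)).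
  apply: univ; apply: (pullback_central hpt.1 hw hs) => // m ->.
  exact: lin0 (hom_linear hpi.1.1).
Qed.
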